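(* If $\mathcal{M}=((X,\mathcal{C}_R),\mathcal{V})$ is a quasi-discrete closure model, then for all $x_1,x_2\in X$, $x_1\simeq x_2$ implies $x_1\equiv_{SLCS}x_2$.
   Context: Quasi-discrete closure model: $\mathcal{C}_R(A)=A\cup\{x\mid\exists a\in A.\ aRx\}$, $\vec{\mathcal{C}}(x)=\mathcal{C}_R(\{x\})$, $\overleftarrow{\mathcal{C}}(x)=\mathcal{C}_{R^{-1}}(\{x\})$, $\mathcal{V}:AP\to\mathcal{P}(X)$, $\mathcal{V}^{-1}(x)=\{p\mid x\in\mathcal{V}(p)\}$. A path is a function $\pi:\mathbb{N}\to X$ that is continuous from $(\mathbb{N},\mathcal{C}_{succ})$ (closure based on $n\mapsto n+1$) to $(X,\mathcal{C}_R)$, i.e. $\pi[\mathcal{C}_{succ}(N)]\subseteq\mathcal{C}_R(\pi[N])$ for all $N\subseteq\mathbb{N}$. SLCS formulas: $\Phi::=p\mid\neg\Phi\mid\Phi\lor\Phi\mid\vec\rho\,\Phi_1[\Phi_2]\mid\overleftarrow\rho\,\Phi_1[\Phi_2]$; $x\models\vec\rho\,\Phi_1[\Phi_2]$ iff there are a path $\pi$ and $\ell$ with $\pi(0)=x$, $\pi(\ell)\models\Phi_1$, $\pi(j)\models\Phi_2$ for $0<j<\ell$; $x\models\overleftarrow\rho\,\Phi_1[\Phi_2]$ iff there are a path $\pi$ and $\ell$ with $\pi(\ell)=x$, $\pi(0)\models\Phi_1$, $\pi(j)\models\Phi_2$ for $0<j<\ell$; atoms and Boolean connectives as usual. $\equiv_{SLCS}$: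 satisfying the same SLCS formulas. $\simeq$: union of all non-empty equivalence relations $B$ with $(x_1,x_2)\in B\Rightarrow\mathcal{V}^{-1}(x_1)=\mathcal{V}^{-1}(x_2)$ and for all $C\in X/B$, $\vec{\mathcal{C}}(x_1)\cap C\neq\emptyset\iff\vec{\mathcal{C}}(x_2)\cap C\neq\emptyset$ and $\overleftarrow{\mathcal{C}}(x_1)\cap C\neq\emptyset\iff\overleftarrow{\mathcal{C}}(x_2)\cap C\neq\emptyset$. *)

From Stdlib Require Import Arith.

Set Implicit Arguments.

Definition closR {X : Type} (R : X -> X -> Prop) (A : X -> Prop) : X -> Prop :=
  fun x => A x \/ exists a, A a /\ R a x.

Definition img {A B : Type} (f : A -> B) (N : A -> Prop) : B -> Prop :=
  fun y => exists n, N n /\ f n = y.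

Definition sing {X : Type} (x : X) : X -> Prop := fun y => y = x.

Definition inv {X : Type} (R : X -> X -> Prop) : X -> X -> Prop := fun x y => R y x.

Definition fwdC {X : Type} (R : X -> X -> Prop) (x : X) : X -> Prop := closR R (sing x).
Definition bwdC {X : Type} (R : X -> X -> Prop) (x : X) : X -> Prop := closR (inv R) (sing x).

Definition succR : nat -> nat -> Prop := fun n m => m = S n.

(** A path: continuous function (N, C_succ) -> (X, C_R). *)
Definition is_path {X : Type} (R : X -> X -> Prop) (pi : nat -> X) : Prop :=
  forall (N : nat -> Prop) (y : X),
    img pi (closR succR N) y -> closR R (img pi N) y.

Inductive form (AP : Type) : Type :=
| FAtom : AP -> form AP
| FNot : form AP -> form AP
| FOr : form AP -> form AP -> form AP
| FRhoF : form AP -> form AP -> form AP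
| FRhoB : form AP -> form AP -> form AP.

Fixpoint sat {X AP : Type} (R : X -> X -> Prop) (V : AP -> X -> Prop)
  (x : X) (phi : form AP) : Prop :=
  match phi with
  | FAtom p => V p x
  | FNot f => ~ sat R V x f
  | FOr f g => sat R V x f \/ sat R V x g
  | FRhoF f g => exists (pi : nat -> X) (l : nat),
      is_path R pi /\ pi 0 = x /\ sat R V (pi l) f /\
      (forall j, 0 < j -> j < l -> sat R V (pi j) g)
  | FRhoB f g => exists (pi : nat -> X) (l : nat),
      is_path R pi /\ pi l = x /\ sat R V (pi 0) f /\
      (forall j, 0 < j -> j < l -> sat R V (pi j) g)
  end.

Definition slcs_equiv {X AP : Type} (R : X -> X -> Prop) (V : AP -> X -> Prop)
  (x1 x2 : X) : Prop :=
  forall phi : form AP, sat R V x1 phi <-> sat R V x2 phi.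

Definition is_equiv {X : Type} (B : X -> X -> Prop) : Prop :=
  (forall x, B x x) /\ (forall x y, B x y -> B y x) /\
  (forall x y z, B x y -> B y z -> B x z).

(** The class C = [y]_B ∈ X/B meets the set S. *)
Definition meets_class {X : Type} (B : X -> X -> Prop) (S : X -> Prop) (y : X) : Prop :=
  exists z, S z /\ B y z.

Definition is_bisim {X AP : Type} (R : X -> X -> Prop) (V : AP -> X -> Prop)
  (B : X -> X -> Prop) : Prop :=
  (exists x y, B x y) /\ is_equiv B /\
  forall x1 x2, B x1 x2 ->
    (forall p : AP, V p x1 <-> V p x2) /\
    (forall y : X,
       (meets_class B (fwdC R x1) y <-> meets_class B (fwdC R x2) y) /\
       (meets_class B (bwdC R x1) y <-> meets_class B (bwdC R x2) y)).

Definition bisimilar {X AP : Type} (R : X -> X -> Prop) (V : AP -> X -> Prop)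
  (x1 x2 : X) : Prop :=
  exists B, is_bisim R V B /\ B x1 x2.

From Stdlib Require Import Arith Lia.

(** The proof is by induction on formulas, carried out for a fixed relation
    [B] witnessing [x1 ≃ x2].  Atoms and Boolean connectives are immediate
    (negation uses the symmetry of [B]).  The reachability operators need
    path transfer, which rests on three facts established first:
    - in a quasi-discrete space a path is exactly a sequence whose
      consecutive points are equal or [R]-related ([is_path_iff_local]);
    - a relation satisfying the bisimulation clauses has the forward and
      backward "zig" property for single (reflexive) steps;
    - by induction on the length, any zig relation lifts a path prefix
      [pi 0, ..., pi l] starting (resp. ending) at a related point to a
      pointwise related path starting (resp. ending) at the given point. *)

Section Paths.

Variables (X : Type) (R : X -> X -> Prop).

Definition local_step (a b : X) : Prop := b = a \/ R a b.

Lemma is_path_iff_local (pi : nat -> X) :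
  is_path R pi <-> forall n, local_step (pi n) (pi (S n)).
Proof.
  split.
  - intros Hpath n.
    destruct (Hpath (sing n) (pi (S n))) as [[m [Hm E]] | [b [[m [Hm E]] Hr]]].
    + exists (S n). split; [right; exists n; split; reflexivity | reflexivity].
    + unfold sing in Hm; subst. left. symmetry. exact E.
    + unfold sing in Hm; subst. right. exact Hr.
  - intros Hloc N y [n [[Hn | [a [Ha E]]] Ey]].
    + left. exists n. auto.
    + unfold succR in E; subst n y. destruct (Hloc a) as [E | E].
      * left. exists a. split; [exact Ha | symmetry; exact E].
      * right. exists (pi a). split; [exists a; auto | exact E].
Qed.

Lemma const_path (x : X) : is_path R (fun _ => x).
Proof. apply is_path_iff_local. intro. left. reflexivity. Qed.

Lemma cons_path (x : X) (pi : nat -> X) :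
  local_step x (pi 0) -> is_path R pi ->
  is_path R (fun k => match k with 0 => x | S k' => pi k' end).
Proof.
  intros Hx Hpath. apply is_path_iff_local. intros [|n]; [exact Hx|].
  apply is_path_iff_local. exact Hpath.
Qed.

Lemma tail_path (pi : nat -> X) :
  is_path R pi -> is_path R (fun k => pi (S k)).
Proof.
  intro Hpath. apply is_path_iff_local. intro n. apply is_path_iff_local. exact Hpath.
Qed.

Lemma snoc_path (pi : nat -> X) (l : nat) (x : X) :
  is_path R pi -> local_step (pi l) x ->
  is_path R (fun k => if k <=? l then pi k else x).
Proof.
  intros Hpath Hx. apply is_path_iff_local. intro m.
  destruct (Nat.leb_spec m l), (Nat.leb_spec (S m) l).
  - apply is_path_iff_local. exact Hpath.
  - replace m with l by lia. exact Hx.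
  - lia.
  - left. reflexivity.
Qed.

Section Lifting.

Variable B : X -> X -> Prop.

Hypothesis fwd_zig : forall a b c, B a b -> local_step a c ->
  exists z, local_step b z /\ B c z.

Hypothesis bwd_zig : forall a b c, B a b -> local_step c a ->
  exists z, local_step z b /\ B c z.

Lemma lift_path_forward (l : nat) : forall (pi : nat -> X) (x : X),
  is_path R pi -> B (pi 0) x ->
  exists pi', is_path R pi' /\ pi' 0 = x /\ forall k, k <= l -> B (pi k) (pi' k).
Proof.
  induction l as [|l IH]; intros pi x Hpath Hx.
  - exists (fun _ => x). split; [apply const_path|split; [reflexivity|]].
    intros k Hk. replace k with 0 by lia. exact Hx.
  - assert (Hstep : local_step (pi 0) (pi 1)) by (apply is_path_iff_local; exact Hpath).
    destruct (fwd_zig _ _ _ Hx Hstep) as [z [Hxz Hz]].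
    destruct (IH (fun k => pi (S k)) z (tail_path pi Hpath) Hz) as [pi' [Hpath' [E0 Hrel]]].
    exists (fun k => match k with 0 => x | S k' => pi' k' end).
    split; [apply cons_path; [rewrite E0; exact Hxz | exact Hpath'] | split; [reflexivity|]].
    intros [|k] Hk; [exact Hx | apply Hrel; lia].
Qed.

Lemma lift_path_backward (l : nat) : forall (pi : nat -> X) (x : X),
  is_path R pi -> B (pi l) x ->
  exists pi', is_path R pi' /\ pi' l = x /\ forall k, k <= l -> B (pi k) (pi' k).
Proof.
  induction l as [|l IH]; intros pi x Hpath Hx.
  - exists (fun _ => x). split; [apply const_path|split; [reflexivity|]].
    intros k Hk. replace k with 0 by lia. exact Hx.
  - assert (Hstep : local_step (pi l) (pi (S l))) by (apply is_path_iff_local; exact Hpath).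
    destruct (bwd_zig _ _ _ Hx Hstep) as [z [Hzx Hz]].
    destruct (IH pi z Hpath Hz) as [pi' [Hpath' [El Hrel]]].
    exists (fun k => if k <=? l then pi' k else x).
    split; [apply snoc_path; [exact Hpath' | rewrite El; exact Hzx] | split].
    + destruct (Nat.leb_spec (S l) l); [lia | reflexivity].
    + intros k Hk. destruct (Nat.leb_spec k l) as [Hkl | Hkl].
      * apply Hrel. exact Hkl.
      * replace k with (S l) by lia. exact Hx.
Qed.

End Lifting.

End Paths.

Arguments local_step {X} R a b.
Arguments lift_path_forward {X R B}.
Arguments lift_path_backward {X R B}.

Section Bisimulation.

Variables (X AP : Type) (R : X -> X -> Prop) (V : AP -> X -> Prop) (B : X -> X -> Prop).
Hypothesis HB : is_bisim R V B.

Lemma bisim_fwd_zig (a b c : X) :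
  B a b -> local_step R a c -> exists z, local_step R b z /\ B c z.
Proof.
  destruct HB as [_ [[Hrefl _] Hclauses]]. intros Hab Hac.
  destruct (proj1 (proj1 (proj2 (Hclauses a b Hab) c))) as [z [Hz Hcz]].
  - exists c. split; [|apply Hrefl].
    destruct Hac as [E | E]; [left; exact E | right; exists a; split; [reflexivity | exact E]].
  - exists z. split; [|exact Hcz].
    destruct Hz as [E | [d [Ed E]]]; [left; exact E | right; unfold sing in Ed; subst; exact E].
Qed.

Lemma bisim_bwd_zig (a b c : X) :
  B a b -> local_step R c a -> exists z, local_step R z b /\ B c z.
Proof.
  destruct HB as [_ [[Hrefl _] Hclauses]]. intros Hab Hca.
  destruct (proj1 (proj2 (proj2 (Hclauses a b Hab) c))) as [z [Hz Hcz]].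
  - exists c. split; [|apply Hrefl].
    destruct Hca as [E | E]; [left; symmetry; exact E | right; exists a; split; [reflexivity | exact E]].
  - exists z. split; [|exact Hcz].
    destruct Hz as [E | [d [Ed E]]]; [left; symmetry; exact E | right; unfold sing in Ed; subst; exact E].
Qed.

Lemma bisim_preserves_sat (phi : form AP) : forall a b : X,
  B a b -> sat R V a phi -> sat R V b phi.
Proof.
  destruct HB as [_ [[_ [Hsym _]] Hclauses]].
  induction phi as [p | f IH | f IHf g IHg | f IHf g IHg | f IHf g IHg];
    intros a b Hab; simpl.
  - apply (proj1 (Hclauses a b Hab) p).
  - intros Hna Hb. apply Hna. exact (IH b a (Hsym _ _ Hab) Hb).
  - intros [H | H]; [left; exact (IHf a b Hab H) | right; exact (IHg a b Hab H)].
  - intros [pi [l [Hpath [E0 [Hf Hg]]]]]. subst a.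
    destruct (lift_path_forward bisim_fwd_zig l pi b Hpath Hab) as [pi' [Hpath' [E' Hrel]]].
    exists pi', l. split; [exact Hpath' | split; [exact E' | split]].
    + exact (IHf _ _ (Hrel l (le_n l)) Hf).
    + intros j Hj0 Hjl. apply (IHg (pi j)); [apply Hrel; lia | auto].
  - intros [pi [l [Hpath [El [Hf Hg]]]]]. subst a.
    destruct (lift_path_backward bisim_bwd_zig l pi b Hpath Hab) as [pi' [Hpath' [E' Hrel]]].
    exists pi', l. split; [exact Hpath' | split; [exact E' | split]].
    + exact (IHf _ _ (Hrel 0 (Nat.le_0_l l)) Hf).
    + intros j Hj0 Hjl. apply (IHg (pi j)); [apply Hrel; lia | auto].
Qed.

End Bisimulation.

Arguments bisim_preserves_sat {X AP R V B}.

Theorem lemma5 (X AP : Type) (R : X -> X -> Prop) (V : AP -> X -> Prop) (x1 x2 : X) :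
  bisimilar R V x1 x2 -> slcs_equiv R V x1 x2.
Proof.
  intros [B [HB H12]] phi.
  assert (Hsym : forall x y, B x y -> B y x) by apply HB.
  split; apply (bisim_preserves_sat HB); auto.
Qed.
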